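(* Let $G$ be a group, $A$ a semilattice of groups, and $\Theta=(\theta,w)$, $\Theta'=(\theta',w')$ twisted partial actions of $G$ on $A$. If $\Theta$ is equivalent to $\Theta'$, then the corresponding twisted $E(A)*_\theta G$-module structures $\Lambda=\Lambda^\Theta$ and $\Lambda'=\Lambda^{\Theta'}$ on $A$ are equivalent.
   Context: A semilattice of groups is an inverse semigroup $A$ with central idempotents; $A_e=\{a: aa^{-1}=a^{-1}a=e\}$. Multipliers of a semigroup $T$: pairs $(L,R)$ of maps $T\to T$ with $L(st)=L(s)t$, $R(st)=sR(t)$, $sL(t)=R(s)t$, written $ws=L(s)$, $sw=R(s)$; monoid $\mathcal M(T)$, unit group $\mathcal U(\mathcal M(T))$. A twisted partial action of $G$ on $A$ is $(\theta,w)$ with isomorphisms $\theta_x:D_{x^{-1}}\to D_x$ of nonempty ideals and $w_{x,y}\in\mathcal U(\mathcal M(D_xD_{xy}))$ such that (i) $D_x^2=D_x$, $D_xD_y=D_yD_x$; (ii) $D_1=A$, $\theta_1=\mathrm{id}$; (iii) $\theta_x(D_{x^{-1}}D_y)=D_xD_{xy}$; (iv) $\theta_x\theta_y(s)=w_{x,y}\theta_{xy}(s)w_{x,y}^{-1}$ on $D_{y^{-1}}D_{y^{-1}x^{-1}}$; (v) $w_{1,x}=w_{x,1}$ = identity of $D_x$; (vi) $\theta_x(sw_{y,z})w_{x,yz}=\theta_x(s)w_{x,y}w_{xy,z}$ on $D_{x^{-1}}D_yD_{yz}$. $(\theta,w)$ and $(\theta',w')$ are equivalent if $D'_x=D_x$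 and there are $\varepsilon_x\in\mathcal U(\mathcal M(D_x))$ with $\theta'_x(s)=\varepsilon_x\theta_x(s)\varepsilon_x^{-1}$ ($s\in D_{x^{-1}}$) and $\theta'_x(s)w'_{x,y}\varepsilon_{xy}=\varepsilon_x\theta_x(s\varepsilon_y)w_{x,y}$ ($s\in D_{x^{-1}}D_y$). The maps $\theta_x$ restrict to a partial action $\theta$ of $G$ on $E(A)$; equivalent twisted partial actions have the same restriction, so $E(A)*_\theta G=E(A)*_{\theta'}G=\{e\delta_x: e\in E(D_x)\}$ with product $e\delta_x\cdot f\delta_y=\theta_x(\theta_x^{-1}(e)f)\delta_{xy}$ (an $E$-unitary inverse semigroup). $\Lambda^\Theta=(\alpha,\lambda,f)$ is given by $\alpha(e\delta_1)=e$, $\lambda_{e\delta_x}(a)=\theta_x(\theta_x^{-1}(e)a)$, $f(e\delta_x,e'\delta_y)=\theta_x(\theta_x^{-1}(e)e')w_{x,y}$ (and similarly for $\Theta'$). Two twisted module structures $(\alpha,\lambda,f)$, $(\alpha',\lambda',f')$ over an inverse semigroup $S$ are equivalent if $\alpha'=\alpha$ and there is $g:S\to A$ with $g(s)\in A_{\alpha(ss^{-1})}$, $\lambda'_s(a)=g(s)\lambda_s(a)g(s)^{-1}$ and $f'(s,t)g(st)=g(s)\lambda_s(g(t))f(s,t)$. *)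

Set Implicit Arguments.
Unset Strict Implicit.

Record Group := {
  gcar :> Type;
  gmul : gcar -> gcar -> gcar;
  g1 : gcar;
  ginv : gcar -> gcar;
  gmulA : forall x y z, gmul x (gmul y z) = gmul (gmul x y) z;
  gmul1l : forall x, gmul g1 x = x;
  gmul1r : forall x, gmul x g1 = x;
  gmulVl : forall x, gmul (ginv x) x = g1;
  gmulVr : forall x, gmul x (ginv x) = g1 }.

(* ---------- semilattices of groups ----------
   An inverse semigroup (every a has a unique b with aba = a, bab = b,
   written sinv a) whose idempotents are central. *)
Record SLG := {
  scar :> Type;
  smul : scar -> scar -> scar;
  sinv : scar -> scar;
  smulA : forall a b c, smul a (smul b c) = smul (smul a b) c;
  sinv_l : forall a, smul (smul a (sinv a)) a = a;
  sinv_r : forall a, smul (smul (sinv a) a) (sinv a) = sinv a;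
  sinv_uniq : forall a b, smul (smul a b) a = a -> smul (smul b a) b = b -> b = sinv a;
  idem_central : forall e a, smul e e = e -> smul e a = smul a e }.

Section Sets.
Variable A : SLG.

Definition setprod (P Q : A -> Prop) : A -> Prop :=
  fun a => exists p q, P p /\ Q q /\ a = smul p q.

Definition set_eq (P Q : A -> Prop) : Prop := forall a, P a <-> Q a.

Definition nonempty_ideal (P : A -> Prop) : Prop :=
  (exists a, P a) /\ (forall a b, P a -> P (smul a b) /\ P (smul b a)).

Definition inAe (e a : A) : Prop := smul a (sinv a) = e /\ smul (sinv a) a = e.

(* (L,R) is a multiplier of T  (ws = L s, sw = R s), maps T -> T *)
Definition is_mult (T : A -> Prop) (L R : A -> A) : Prop :=
  (forall s, T s -> T (L s)) /\ (forall s, T s -> T (R s)) /\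
  (forall s t, T s -> T t -> L (smul s t) = smul (L s) t) /\
  (forall s t, T s -> T t -> R (smul s t) = smul s (R t)) /\
  (forall s t, T s -> T t -> smul s (L t) = smul (R s) t).
End Sets.

(* An element of the unit group U(M(T)): a multiplier (mL,mR) together with
   its inverse (mLi,mRi).  Product in M(T): (w w') s = w (w' s),
   s (w w') = (s w) w'. *)
Record UMult (A : SLG) (T : A -> Prop) := {
  mL : A -> A; mR : A -> A; mLi : A -> A; mRi : A -> A;
  m_mult : is_mult T mL mR;
  mi_mult : is_mult T mLi mRi;
  mLK : forall t, T t -> mL (mLi t) = t;
  mLiK : forall t, T t -> mLi (mL t) = t;
  mRK : forall t, T t -> mR (mRi t) = t;
  mRiK : forall t, T t -> mRi (mR t) = t }.

(* ---------- twisted partial actions ----------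
   theta x : D_{x^-1} -> D_x is an isomorphism, given together with its
   inverse map thi x : D_x -> D_{x^-1}; values outside the domains are
   irrelevant. *)
Record TPA (G : Group) (A : SLG) := {
  D : G -> A -> Prop;
  th : G -> A -> A;
  thi : G -> A -> A;
  w : forall x y : G, UMult (setprod (D x) (D (gmul x y)));
  D_ideal : forall x, nonempty_ideal (D x);
  th_into : forall x s, D (ginv x) s -> D x (th x s);
  th_mul : forall x s t, D (ginv x) s -> D (ginv x) t ->
             th x (smul s t) = smul (th x s) (th x t);
  thi_into : forall x a, D x a -> D (ginv x) (thi x a);
  th_thi : forall x a, D x a -> th x (thi x a) = a;
  thi_th : forall x s, D (ginv x) s -> thi x (th x s) = s;
  D_sq : forall x, set_eq (setprod (D x) (D x)) (D x);
  D_comm : forall x y, set_eq (setprod (D x) (D y)) (setprod (D y) (D x));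
  D_1 : forall a, D (g1 G) a;
  th_1 : forall a, th (g1 G) a = a;
  th_image : forall x y b,
    (exists s, setprod (D (ginv x)) (D y) s /\ th x s = b) <->
    setprod (D x) (D (gmul x y)) b;
  (* (iv)  theta_x theta_y (s) = w_{x,y} theta_{xy}(s) w_{x,y}^{-1} *)
  th_comp : forall x y s,
    setprod (D (ginv y)) (D (gmul (ginv y) (ginv x))) s ->
    th x (th y s) = mRi (w x y) (mL (w x y) (th (gmul x y) s));
  w_1l : forall x s, D x s -> mL (w (g1 G) x) s = s /\ mR (w (g1 G) x) s = s;
  w_1r : forall x s, D x s -> mL (w x (g1 G)) s = s /\ mR (w x (g1 G)) s = s;
  w_cocycle : forall x y z s,
    setprod (setprod (D (ginv x)) (D y)) (D (gmul y z)) s ->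
    mR (w x (gmul y z)) (th x (mR (w y z) s)) =
    mR (w (gmul x y) z) (mR (w x y) (th x s)) }.

Definition TPA_equiv (G : Group) (A : SLG) (T T' : TPA G A) : Prop :=
  (forall x a, D T' x a <-> D T x a) /\
  exists eps : forall x : G, UMult (D T x),
    (forall x s, D T (ginv x) s ->
       th T' x s = mRi (eps x) (mL (eps x) (th T x s))) /\
    (forall x y s, setprod (D T (ginv x)) (D T y) s ->
       mR (eps (gmul x y)) (mR (w T' x y) (th T' x s)) =
       mL (eps x) (mR (w T x y) (th T x (mR (eps y) s)))).

(* ---------- E(A) *_theta G ----------
   Elements e delta_x are encoded as pairs (e, x) : A * G with
   e idempotent and e in D_x. *)
Section Crossed.
Variables (G : Group) (A : SLG) (T : TPA G A).

Definition inS (p : A * G) : Prop := smul (fst p) (fst p) = fst p /\ D T (snd p) (fst p).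

Definition mulS (p q : A * G) : A * G :=
  (th T (snd p) (smul (thi T (snd p) (fst p)) (fst q)), gmul (snd p) (snd q)).

Definition invS (p : A * G) : A * G := (thi T (snd p) (fst p), ginv (snd p)).

(* Lambda^Theta = (alpha, lambda, f) *)
Definition alphaS (p : A * G) : A := fst p.
Definition lamS (p : A * G) (a : A) : A :=
  th T (snd p) (smul (thi T (snd p) (fst p)) a).
Definition fS (p q : A * G) : A :=
  mR (w T (snd p) (snd q)) (th T (snd p) (smul (thi T (snd p) (fst p)) (fst q))).
End Crossed.

(* ---------- equivalence of twisted module structures ----------
   over an inverse semigroup S presented as a carrier type St with a
   membership predicate inSt and operations mulSt, invSt. *)
Definition TMS_equiv (A : SLG) (St : Type) (inSt : St -> Prop)
  (mulSt : St -> St -> St) (invSt : St -> St)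
  (alpha : St -> A) (lam : St -> A -> A) (f : St -> St -> A)
  (alpha' : St -> A) (lam' : St -> A -> A) (f' : St -> St -> A) : Prop :=
  (forall e, inSt e -> mulSt e e = e -> alpha' e = alpha e) /\
  exists g : St -> A,
    (forall s, inSt s -> inAe (alpha (mulSt s (invSt s))) (g s)) /\
    (forall s a, inSt s -> lam' s a = smul (smul (g s) (lam s a)) (sinv (g s))) /\
    (forall s t, inSt s -> inSt t ->
       smul (f' s t) (g (mulSt s t)) = smul (smul (g s) (lam s (g t))) (f s t)).

(* The gauge g(e delta_x) := eps_x e, the value at e of the unit multiplier
   eps_x relating the two twisted partial actions, witnesses the equivalence.
   Every identity reduces to the fact that a unit multiplier W of an ideal T
   acts on an idempotent e in T by an element W e of the maximal subgroup A_e,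
   so that conjugation by W on eAe is conjugation by W e. *)
From Stdlib Require Import Setoid.

Set Implicit Arguments.
Unset Strict Implicit.

Section Ideals.
Variable A : SLG.

Lemma ideal_mulr (P : A -> Prop) a b : nonempty_ideal P -> P a -> P (smul a b).
Proof. intros [_ HP] Ha. exact (proj1 (HP a b Ha)). Qed.

Lemma ideal_mull (P : A -> Prop) a b : nonempty_ideal P -> P b -> P (smul a b).
Proof. intros [_ HP] Hb. exact (proj2 (HP b a Hb)). Qed.

Lemma setprod_ideal_l (P Q : A -> Prop) a :
  nonempty_ideal P -> setprod P Q a -> P a.
Proof. intros HP [p [q [Hp [_ ->]]]]. now apply ideal_mulr. Qed.

Lemma setprod_ideal_r (P Q : A -> Prop) a :
  nonempty_ideal Q -> setprod P Q a -> Q a.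
Proof. intros HQ [p [q [_ [Hq ->]]]]. now apply ideal_mull. Qed.

Lemma idem_mul (e f : A) :
  smul e e = e -> smul f f = f -> smul (smul e f) (smul e f) = smul e f.
Proof.
  intros He Hf.
  rewrite <- smulA, (smulA f e f), <- (idem_central f He), <- smulA, Hf.
  now rewrite smulA, He.
Qed.

End Ideals.

Section Multipliers.
Variables (A : SLG) (T : A -> Prop) (L R : A -> A).
Hypothesis HLR : is_mult T L R.

Lemma mult_idemE e :
  T e -> smul e e = e -> L e = R e /\ smul e (L e) = L e.
Proof.
  destruct HLR as [_ [_ [HLm [HRm HLRm]]]]. intros Te He.
  assert (Le : L e = smul (L e) e) by (rewrite <- HLm, He; auto).
  assert (Re : R e = smul e (R e)) by (rewrite <- HRm, He; auto).
  assert (eL : smul e (L e) = smul (R e) e) by auto.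
  pose proof (idem_central (L e) He) as cL.
  pose proof (idem_central (R e) He) as cR.
  split; congruence.
Qed.

Lemma multR_mul_idem s f :
  T f -> T (smul s f) -> smul f f = f -> R (smul s f) = smul s (L f).
Proof.
  intros Tf Tsf Hf.
  destruct HLR as [_ [_ [_ [HRm _]]]].
  destruct (mult_idemE Tf Hf) as [LRf fLf].
  assert (Esf : smul s f = smul (smul s f) f) by now rewrite <- smulA, Hf.
  rewrite Esf at 1. rewrite HRm, <- LRf, <- smulA, fLf by auto. reflexivity.
Qed.

End Multipliers.

(* Writing w for (L', R'): k (w h) = (k w) h, as w h = h w for an idempotent h. *)
Lemma mult_swap_idem (A : SLG) (T Q : A -> Prop) (L R L' R' : A -> A) e k h :
  is_mult T L R -> is_mult Q L' R' -> (forall a, Q a -> T a) ->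
  T e -> Q k -> Q h -> smul e k = k -> smul h h = h ->
  smul (L (R' k)) h = smul (smul (L e) k) (R' h).
Proof.
  intros HLR HLR' QT Te Qk Qh ek hh.
  destruct HLR as [_ [_ [HLm _]]].
  destruct (mult_idemE HLR' Qh hh) as [LRh _].
  destruct HLR' as [_ [HR' [_ [_ HLRm']]]].
  rewrite <- (HLm e k), ek by auto.
  rewrite <- (HLm k (R' h)), <- LRh, HLRm' by auto.
  rewrite HLm by auto. reflexivity.
Qed.

Section UnitMultipliers.
Variables (A : SLG) (T : A -> Prop) (W : UMult T) (e : A).
Hypotheses (Te : T e) (He : smul e e = e).

Lemma umult_idem_inv :
  smul (mL W e) (mLi W e) = e /\ smul (mLi W e) (mL W e) = e.
Proof.
  destruct (mult_idemE (m_mult W) Te He) as [LRe _].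
  destruct (mult_idemE (mi_mult W) Te He) as [LRie _].
  pose proof (m_mult W) as [HL [_ [_ [_ HLRm]]]].
  pose proof (mi_mult W) as [HLi [_ [_ [_ HLRim]]]].
  split.
  - rewrite HLRim, LRe, mRiK by auto. exact He.
  - rewrite HLRm, LRie, mRK by auto. exact He.
Qed.

Lemma umult_sinv : sinv (mL W e) = mLi W e.
Proof.
  destruct umult_idem_inv as [Lie iLe].
  destruct (mult_idemE (m_mult W) Te He) as [_ eLe].
  destruct (mult_idemE (mi_mult W) Te He) as [_ eLie].
  symmetry. apply sinv_uniq.
  - rewrite Lie. exact eLe.
  - rewrite iLe. exact eLie.
Qed.

Lemma umult_inAe : inAe e (mL W e).
Proof. unfold inAe. rewrite umult_sinv. exact umult_idem_inv. Qed.

Lemma umult_conj t :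
  T t -> smul e t = t ->
  mRi W (mL W t) = smul (smul (mL W e) t) (sinv (mL W e)).
Proof.
  intros Tt et.
  pose proof (m_mult W) as [HL [_ [HLm _]]].
  pose proof (mi_mult W) as [_ [_ [_ [HRim _]]]].
  destruct (mult_idemE (mi_mult W) Te He) as [LRie _].
  assert (te : smul t e = t) by now rewrite <- idem_central.
  assert (Lt : mL W t = smul (mL W e) t) by (rewrite <- HLm, et; auto).
  assert (Lte : smul (mL W e) t = smul (smul (mL W e) t) e)
    by now rewrite <- smulA, te.
  rewrite umult_sinv, LRie, Lt, Lte at 1.
  rewrite HRim by (rewrite <- ?Lt; auto).
  reflexivity.
Qed.

End UnitMultipliers.

Section TwistedPartialAction.
Variables (G : Group) (A : SLG) (T : TPA G A).

Lemma th_idem x s :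
  D T (ginv x) s -> smul s s = s -> smul (th T x s) (th T x s) = th T x s.
Proof. intros Hs Hss. now rewrite <- th_mul, Hss. Qed.

Lemma thi_idem x e :
  D T x e -> smul e e = e -> smul (thi T x e) (thi T x e) = thi T x e.
Proof.
  intros Hx He.
  assert (Hi : D T (ginv x) (thi T x e)) by now apply thi_into.
  rewrite <- (thi_th (ideal_mulr (thi T x e) (D_ideal T _) Hi)).
  now rewrite th_mul, th_thi, He by auto.
Qed.

Lemma th_thi_absorb x e a :
  D T x e -> smul e e = e -> D T (ginv x) (smul (thi T x e) a) ->
  smul e (th T x (smul (thi T x e) a)) = th T x (smul (thi T x e) a).
Proof.
  intros Hx He Ha.
  rewrite <- (th_thi Hx) at 1.
  rewrite <- th_mul, smulA, thi_idem by (auto; now apply thi_into).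
  reflexivity.
Qed.

Lemma th_setprod x y s :
  setprod (D T (ginv x)) (D T y) s -> setprod (D T x) (D T (gmul x y)) (th T x s).
Proof. intros Hs. apply th_image. now exists s. Qed.

Lemma mR_w_th_setprod x y s :
  setprod (D T (ginv x)) (D T y) s ->
  setprod (D T x) (D T (gmul x y)) (mR (w T x y) (th T x s)).
Proof. intros Hs. apply (m_mult (w T x y)). now apply th_setprod. Qed.

End TwistedPartialAction.

Section Equivalence.
Variables (G : Group) (A : SLG) (T T' : TPA G A).
Hypothesis HD : forall x a, D T' x a <-> D T x a.
Variable eps : forall x : G, UMult (D T x).
Hypothesis Heps_th : forall x s, D T (ginv x) s ->
  th T' x s = mRi (eps x) (mL (eps x) (th T x s)).
Hypothesis Heps_w : forall x y s, setprod (D T (ginv x)) (D T y) s ->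
  mR (eps (gmul x y)) (mR (w T' x y) (th T' x s)) =
  mL (eps x) (mR (w T x y) (th T x (mR (eps y) s))).

Definition gauge (p : A * G) : A := mL (eps (snd p)) (fst p).

Lemma equiv_thi_idem x e :
  D T x e -> smul e e = e -> thi T' x e = thi T x e.
Proof.
  intros Hx He.
  assert (Hi : D T (ginv x) (thi T x e)) by now apply thi_into.
  assert (th'e : th T' x (thi T x e) = e).
  { rewrite Heps_th, th_thi by auto.
    destruct (mult_idemE (m_mult (eps x)) Hx He) as [-> _].
    now apply mRiK. }
  rewrite <- th'e at 1. apply thi_th, HD, Hi.
Qed.

Lemma equiv_w_th_in_D x y s :
  setprod (D T (ginv x)) (D T y) s -> D T (gmul x y) (mR (w T' x y) (th T' x s)).
Proof.
  intros [a [b [Ha [Hb ->]]]].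
  apply HD, (setprod_ideal_r (P := D T' x) (D_ideal T' _)), mR_w_th_setprod.
  exists a, b; now rewrite !HD.
Qed.

Lemma gauge_inAe p :
  inS T p -> inAe (alphaS (mulS T p (invS T p))) (gauge p).
Proof.
  destruct p as [e x]; intros [He Hx]; unfold alphaS, mulS, invS, gauge; simpl in *.
  rewrite thi_idem, th_thi by auto.
  now apply umult_inAe.
Qed.

Lemma gauge_lamS p a :
  inS T p -> lamS T' p a = smul (smul (gauge p) (lamS T p a)) (sinv (gauge p)).
Proof.
  destruct p as [e x]; intros [He Hx]; unfold lamS, gauge; simpl in *.
  assert (Ha : D T (ginv x) (smul (thi T x e) a))
    by (apply ideal_mulr; [apply D_ideal | now apply thi_into]).
  rewrite equiv_thi_idem, Heps_th by auto.
  apply umult_conj; auto.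
  - now apply th_into.
  - now apply th_thi_absorb.
Qed.

Lemma gauge_fS p q :
  inS T p -> inS T q ->
  smul (fS T' p q) (gauge (mulS T p q)) =
  smul (smul (gauge p) (lamS T p (gauge q))) (fS T p q).
Proof.
  destruct p as [e x], q as [f y]; intros [He Hx] [Hf Hy].
  unfold fS, lamS, mulS, gauge; simpl in *.
  rewrite equiv_thi_idem by auto.
  set (e' := thi T x e).
  assert (He' : D T (ginv x) e') by now apply thi_into.
  assert (Hs : setprod (D T (ginv x)) (D T y) (smul e' f)) by now exists e', f.
  set (h := th T x (smul e' f)).
  assert (Hh : setprod (D T x) (D T (gmul x y)) h) by now apply th_setprod.
  assert (Hhh : smul h h = h).
  { apply th_idem; [now apply (setprod_ideal_l (D_ideal T _) Hs)|].
    apply idem_mul; [now apply thi_idem | exact Hf]. }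
  destruct (m_mult (eps (gmul x y))) as [_ [_ [_ [_ HLRxy]]]].
  rewrite (HLRxy _ _ (equiv_w_th_in_D Hs) (setprod_ideal_r (D_ideal T _) Hh)).
  rewrite Heps_w, (multR_mul_idem (m_mult (eps y))) by
    (auto; apply ideal_mull; auto; apply D_ideal).
  set (k := th T x (smul e' (mL (eps y) f))).
  assert (Hk : setprod (D T x) (D T (gmul x y)) k).
  { apply th_setprod. exists e', (mL (eps y) f).
    split; [exact He'|]. split; [now apply (m_mult (eps y))|reflexivity]. }
  assert (Hek : smul e k = k)
    by (apply th_thi_absorb; auto; now apply ideal_mulr; [apply D_ideal|]).
  apply (mult_swap_idem (m_mult (eps x)) (m_mult (w T x y))); auto.
  intros a; apply setprod_ideal_l, D_ideal.
Qed.

End Equivalence.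

Theorem proposition8p2 (G : Group) (A : SLG) (T T' : TPA G A) :
  TPA_equiv T T' ->
  TMS_equiv (inS T) (mulS T) (invS T)
    (@alphaS G A) (lamS T) (fS T)
    (@alphaS G A) (lamS T') (fS T').
Proof.
  intros [HD [eps [Heps_th Heps_w]]].
  split; [reflexivity|].
  exists (gauge eps).
  split; [|split].
  - apply gauge_inAe.
  - intros p a Hp. now apply gauge_lamS.
  - intros p q Hp Hq. now apply (gauge_fS HD Heps_th Heps_w).
Qed.
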